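(* Let $m\ge1$ and let $\{P^0=I^{\otimes m},P^1,\ldots,P^{2^m-1}\}\subset\mathcal{P}_m$ be a set of distinct Pauli strings with no non-unit prefactors that is closed under multiplication up to constants, i.e. $P^i\ne P^j$ for $i\ne j$ and for all $i,j$ there is $k$ with $P^iP^j\propto P^k$. Then there exists a state $\ket\phi\in(\mathbb{C}^2)^{\otimes m}$ such that $\bra\phi P^i\ket\phi=0$ for all $i\ne0$.
   Context: $\mathcal{P}_m$ is the $m$-qubit Pauli group: all operators $i^\lambda O_1\otimes\cdots\otimes O_m$ with $\lambda\in\{0,1,2,3\}$ and $O_j\in\{I,X,Y,Z\}$; a Pauli string with no non-unit prefactor is one with $\lambda=0$. *)

From mathcomp Require Import all_boot all_order all_algebra all_field.
Set Implicit Arguments. Unset Strict Implicit. Unset Printing Implicit Defensive.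
Import Order.TTheory GRing.Theory Num.Theory.
Local Open Scope ring_scope.

Inductive pauli := PI | PX | PY | PZ.

(* Computational basis state of m qubits: a bit string. *)
Definition bits (m : nat) := {ffun 'I_m -> bool}.

(* Matrix entries <a| sigma |b> of the single-qubit Pauli matrices,
   false = |0>, true = |1>. Y = [[0,-i],[i,0]], Z = diag(1,-1). *)
Definition pauli_entry (o : pauli) (a b : bool) : algC :=
  match o with
  | PI => if a == b then 1 else 0
  | PX => if a == b then 0 else 1
  | PY => if a == b then 0 else (if a then 'i else - 'i)
  | PZ => if a == b then (if a then -1 else 1) else 0
  end.

(* A Pauli string with no prefactor: O_1 (x) ... (x) O_m. *)
Definition pstring (m : nat) := 'I_m -> pauli.

Definition pmat (m : nat) (p : pstring m) (x y : bits m) : algC :=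
  \prod_(j < m) pauli_entry (p j) (x j) (y j).

Definition opmul (m : nat) (A B : bits m -> bits m -> algC) (x y : bits m) : algC :=
  \sum_(z : bits m) A x z * B z y.

Definition proportional (m : nat) (A B : bits m -> bits m -> algC) : Prop :=
  exists c : algC, forall x y, A x y = c * B x y.

Definition expect (m : nat) (A : bits m -> bits m -> algC) (phi : bits m -> algC) : algC :=
  \sum_(x : bits m) \sum_(y : bits m) (phi x)^* * A x y * phi y.

Definition is_state (m : nat) (phi : bits m -> algC) : Prop :=
  \sum_(x : bits m) (phi x)^* * phi x = 1.

From HB Require Import structures.
From mathcomp Require Import all_boot all_order all_algebra all_field.
From mathcomp Require Import ring zify.
Set Implicit Arguments. Unset Strict Implicit. Unset Printing Implicit Defensive.
Import Order.TTheory GRing.Theory Num.Theory.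
Local Open Scope ring_scope.

(* Pauli strings up to phase form the F_2-space F_2^(2m), on which anticommutation is a
   nondegenerate symplectic form, and the P^i form a subgroup S of order 2^m.  A greedy
   construction yields an isotropic subgroup L of order 2^m whose commutant meets S only in
   the identity: while |L| = 2^k < 2^m, L is enlarged by some x commuting with L but outside
   L T, where T is the commutant of L in S, chosen to anticommute with T when |T| = 2^(m-k);
   the count |commutant A| |A| = 4^m provides such an x.  A common +-1-eigenvector v of L
   then has <v|P|v> = 0 for every P in S other than 1: P anticommutes with some g in L, so
   s <v|P|v> = <v|P g|v> = - <v|g P|v> = - s <v|P|v>. *)

Definition pauli_to_bits (o : pauli) : bool * bool :=
  match o with PI => (false, false) | PX => (true, false)
             | PZ => (false, true) | PY => (true, true) end.
Definition bits_to_pauli (b : bool * bool) : pauli :=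
  match b with (false, false) => PI | (true, false) => PX
             | (false, true) => PZ | (true, true) => PY end.
Lemma pauli_to_bitsK : cancel pauli_to_bits bits_to_pauli. Proof. by case. Qed.
HB.instance Definition _ := Finite.copy pauli (can_type pauli_to_bitsK).

Lemma card_pauli : #|{: pauli}| = 4%N.
Proof.
have bits_to_pauliK : cancel bits_to_pauli pauli_to_bits by case; case; case.
rewrite (bij_eq_card (f := pauli_to_bits)) ?card_prod ?card_bool //.
exact: Bijective pauli_to_bitsK bits_to_pauliK.
Qed.

Definition pauli_mul (a b : pauli) : pauli :=
  match a, b with
  | PI, o | o, PI => o
  | PX, PX | PY, PY | PZ, PZ => PI
  | PX, PY | PY, PX => PZ
  | PY, PZ | PZ, PY => PX
  | PZ, PX | PX, PZ => PY
  end.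

Definition pauli_phase (a b : pauli) : algC :=
  match a, b with
  | PX, PY | PY, PZ | PZ, PX => 'i
  | PY, PX | PZ, PY | PX, PZ => - 'i
  | _, _ => 1
  end.

Definition pauli_anti (a b : pauli) : bool := [&& a != PI, b != PI & a != b].

Lemma pauli_mulC : commutative pauli_mul. Proof. by case; case. Qed.
Lemma pauli_mulA : associative pauli_mul. Proof. by case; case; case. Qed.
Lemma pauli_mul1 : left_id PI pauli_mul. Proof. by case. Qed.
Lemma pauli_mulxx a : pauli_mul a a = PI. Proof. by case: a. Qed.

Lemma pauli_antiC a b : pauli_anti a b = pauli_anti b a. Proof. by case: a; case: b. Qed.
Lemma pauli_antixx a : pauli_anti a a = false. Proof. by case: a. Qed.
Lemma pauli_antiDl a b c :
  pauli_anti (pauli_mul a b) c = pauli_anti a c (+) pauli_anti b c.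
Proof. by case: a; case: b; case: c. Qed.

Lemma conjCNi : (- 'i)^* = 'i :> algC. Proof. by rewrite -conjCi conjCK. Qed.

Lemma pauli_entry_mul a b x y :
  \sum_(u : bool) pauli_entry a x u * pauli_entry b u y
  = pauli_phase a b * pauli_entry (pauli_mul a b) x y.
Proof.
rewrite big_bool.
by case: a; case: b; case: x; case: y;
  rewrite /= ?(mulr0, mul0r, mulr1, mul1r, addr0, add0r, mulrN, mulNr, opprK, mulCii).
Qed.

Lemma pauli_phaseC a b : pauli_phase a b = (-1) ^+ pauli_anti a b * pauli_phase b a.
Proof. by case: a; case: b; rewrite /= ?expr1 ?expr0 ?mul1r ?mulN1r ?opprK. Qed.

Lemma pauli_phasexx a : pauli_phase a a = 1. Proof. by case: a. Qed.

Lemma pauli_phase_neq0 a b : pauli_phase a b != 0.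
Proof. by have := @neq0Ci algC; case: a; case: b; rewrite /= ?oner_neq0 ?oppr_eq0. Qed.

Lemma pauli_entry1 x y : pauli_entry PI x y = (x == y)%:R.
Proof. by case: x; case: y. Qed.

Lemma conj_pauli_entry a x y : (pauli_entry a x y)^* = pauli_entry a y x.
Proof.
by case: a; case: x; case: y; rewrite /= ?conjC0 ?conjC1 ?conjCN1 ?conjCi ?conjCNi.
Qed.

Lemma pauli_entry_orth a b :
  \sum_(x : bool) \sum_(y : bool) (pauli_entry a x y)^* * pauli_entry b x y
  = if a == b then 2 else 0.
Proof.
rewrite !big_bool.
by case: a; case: b; rewrite /= ?(conjC0, conjC1, conjCN1, conjCi, conjCNi, opprK, oppr0,
  mulr0, mul0r, mulr1, mul1r, addr0, add0r, mulrN, mulNr, mulCii, addNr, subrr).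
Qed.

Section PauliOperators.
Variable m : nat.
Implicit Types P Q T : pstring m.

Definition pstring_mul P Q : pstring m := fun j => pauli_mul (P j) (Q j).
Definition pstring_phase P Q : algC := \prod_(j < m) pauli_phase (P j) (Q j).
Definition anticomm P Q : bool := \big[addb/false]_(j < m) pauli_anti (P j) (Q j).

Lemma anticommC P Q : anticomm P Q = anticomm Q P.
Proof. by apply: eq_bigr => j _; rewrite pauli_antiC. Qed.

Lemma opmul_pmat P Q x y :
  opmul (pmat P) (pmat Q) x y = pstring_phase P Q * pmat (pstring_mul P Q) x y.
Proof.
rewrite -big_split /=; under eq_bigr do rewrite -pauli_entry_mul.
rewrite bigA_distr_bigA; apply: eq_bigr => z _.
by rewrite -big_split.
Qed.

Lemma opmul_pmatC P Q x y :
  opmul (pmat P) (pmat Q) x y = (-1) ^+ anticomm P Q * opmul (pmat Q) (pmat P) x y.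
Proof.
rewrite !opmul_pmat mulrA; congr (_ * _).
  rewrite /anticomm.
  rewrite (big_morph (fun b : bool => (-1) ^+ b : algC) (signr_addb _) (id2 := false) (expr0 _)).
  by rewrite -big_split; apply: eq_bigr => j _; apply: pauli_phaseC.
by apply: eq_bigr => j _; rewrite /pstring_mul pauli_mulC.
Qed.

Lemma pmat1 x y : pmat (fun _ : 'I_m => PI) x y = (x == y)%:R :> algC.
Proof.
rewrite /pmat; under eq_bigr do rewrite pauli_entry1.
have [<-|neq_xy] := eqVneq x y; first by rewrite big1 // => j _; rewrite eqxx.
have [j neq_j] : exists j, x j != y j.
  apply/existsP; apply: contraNT neq_xy => /existsPn same.
  by apply/eqP/ffunP => j; apply/eqP/negPn.
by rewrite (bigD1 j) //= (negbTE neq_j) mul0r.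
Qed.

Lemma opmul_pmatxx P x y : opmul (pmat P) (pmat P) x y = (x == y)%:R.
Proof.
rewrite opmul_pmat /pstring_phase big1 ?mul1r => [|j _]; last exact: pauli_phasexx.
by rewrite -pmat1; apply: eq_bigr => j _; rewrite /pstring_mul pauli_mulxx.
Qed.

Lemma conj_pmat P x y : (pmat P x y)^* = pmat P y x.
Proof. by rewrite rmorph_prod; apply: eq_bigr => j _; apply: conj_pauli_entry. Qed.

Lemma pmat_orth P Q :
  \sum_(x : bits m) \sum_(y : bits m) (pmat P x y)^* * pmat Q x y
  = \prod_(j < m) (if P j == Q j then 2 else 0).
Proof.
pose F j a b := (pauli_entry (P j) a b)^* * pauli_entry (Q j) a b.
under eq_bigr do under eq_bigr do rewrite rmorph_prod -big_split /=.
under eq_bigr => x _ do rewrite -(bigA_distr_bigA (fun j => F j (x j))) /=.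
rewrite -(bigA_distr_bigA (fun j a => \sum_(b : bool) F j a b)).
by apply: eq_bigr => j _; apply: pauli_entry_orth.
Qed.

Lemma pmat_scale_inj P Q c : (forall x y, pmat P x y = c * pmat Q x y) -> P =1 Q.
Proof.
move=> PcQ j; apply/eqP.
have orth : \prod_(j < m) (if P j == P j then 2 else 0)
            = c * \prod_(j < m) (if P j == Q j then 2 else 0) :> algC.
  rewrite -!pmat_orth mulr_sumr; apply: eq_bigr => x _; rewrite mulr_sumr.
  by apply: eq_bigr => y _; rewrite {2}PcQ mulrCA.
have : \prod_(j < m) (if P j == P j then 2 else 0) != 0 :> algC.
  by rewrite prodf_seq_neq0; apply/allP => i _; rewrite eqxx pnatr_eq0.
rewrite orth mulf_eq0 negb_or => /andP[_].
by rewrite (bigD1 j) //= mulf_eq0 negb_or; case: (P j == Q j); rewrite ?eqxx.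
Qed.

Lemma proportional_opmul_pmat P Q T :
  proportional (opmul (pmat P) (pmat Q)) (pmat T) -> pstring_mul P Q =1 T.
Proof.
case=> c PQcT; apply: (@pmat_scale_inj _ _ (c / pstring_phase P Q)) => x y.
have phase_neq0 : pstring_phase P Q != 0.
  by rewrite prodf_seq_neq0; apply/allP => j _; exact: pauli_phase_neq0.
by rewrite mulrAC -PQcT opmul_pmat mulrC mulKf.
Qed.

End PauliOperators.

(* Pauli strings up to phase, as finite functions so that sets of them are finite. *)
Notation pvec m := {ffun 'I_m -> pauli}.

Section StabilizerStates.
Variable m : nat.

Definition opvec (A : bits m -> bits m -> algC) (v : bits m -> algC) (x : bits m) : algC :=
  \sum_(y : bits m) A x y * v y.

Lemma opvec_opmul A B v x : opvec A (opvec B v) x = opvec (opmul A B) v x.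
Proof.
rewrite /opvec /opmul; under eq_bigr do rewrite mulr_sumr.
rewrite exchange_big; apply: eq_bigr => y _.
by rewrite mulr_suml; apply: eq_bigr => z _; rewrite mulrA.
Qed.

Lemma opvecD A u v x : opvec A (fun y => u y + v y) x = opvec A u x + opvec A v x.
Proof. by rewrite -big_split; apply: eq_bigr => y _; rewrite mulrDr. Qed.

Lemma opvecZ A c v x : opvec A (fun y => c * v y) x = c * opvec A v x.
Proof. by rewrite mulr_sumr; apply: eq_bigr => y _; rewrite mulrCA. Qed.

Lemma eq_opvec A u v x : u =1 v -> opvec A u x = opvec A v x.
Proof. by move=> uv; apply: eq_bigr => y _; rewrite uv. Qed.

Lemma opvec_pmatxx P v x : opvec (pmat P) (opvec (pmat P) v) x = v x.
Proof.
rewrite opvec_opmul /opvec (bigD1 x) //= opmul_pmatxx eqxx mul1r big1 ?addr0 // => y neq_yx.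
by rewrite opmul_pmatxx eq_sym (negbTE neq_yx) mul0r.
Qed.

Lemma opvec_pmatC P Q v x :
  opvec (pmat P) (opvec (pmat Q) v) x
  = (-1) ^+ anticomm P Q * opvec (pmat Q) (opvec (pmat P) v) x.
Proof.
rewrite !opvec_opmul mulr_sumr; apply: eq_bigr => y _.
by rewrite opmul_pmatC mulrA.
Qed.

Lemma opvec_pmat_adj P u v :
  \sum_x (opvec (pmat P) u x)^* * v x = \sum_x (u x)^* * opvec (pmat P) v x.
Proof.
under eq_bigr do rewrite rmorph_sum mulr_suml.
rewrite exchange_big; apply: eq_bigr => y _; rewrite mulr_sumr; apply: eq_bigr => x _.
by rewrite rmorphM /= conj_pmat mulrCA mulrA.
Qed.

Definition pm_eigenvector (P : pstring m) (v : bits m -> algC) :=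
  exists s : bool, forall x, opvec (pmat P) v x = (-1) ^+ s * v x.

Lemma exists_common_eigenvector (gs : seq (pvec m)) :
  {in gs &, forall g h : pvec m, ~~ anticomm g h} ->
  exists2 v : bits m -> algC, exists x, v x != 0 & forall g, g \in gs -> pm_eigenvector g v.
Proof.
elim: gs => [|g gs IH] comm_gs.
  exists (fun x => (x == [ffun=> false])%:R) => //.
  by exists [ffun=> false]; rewrite eqxx oner_neq0.
have [v [x0 vx0_neq0] eig_v] : exists2 v : bits m -> algC,
    exists x, v x != 0 & forall h, h \in gs -> pm_eigenvector h v.
  by apply: IH => h h' hh hh'; apply: comm_gs; rewrite inE ?hh ?hh' orbT.
(* (1 + g) v and (1 - g) v are eigenvectors of g, and they sum to 2 v != 0. *)
pose w (s : bool) y := v y + (-1) ^+ s * opvec (pmat g) v y.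
have eig_w s : forall h, h \in g :: gs -> pm_eigenvector h (w s).
  move=> h; rewrite inE => /predU1P[->|hgs].
    exists s => x; rewrite opvecD opvecZ opvec_pmatxx mulrDr mulrA -expr2 sqrr_sign.
    by rewrite mul1r addrC.
  have [l eig_hv] := eig_v h hgs; exists l => x.
  rewrite opvecD opvecZ eig_hv mulrDr; congr (_ + _).
  rewrite opvec_pmatC (negbTE (comm_gs _ _ _ _)) ?inE ?hgs ?eqxx ?orbT // mul1r.
  by rewrite (eq_opvec _ _ eig_hv) opvecZ mulrCA.
have [s w_neq0] : exists s, exists x, w s x != 0.
  have : w false x0 + w true x0 != 0.
    by rewrite addrACA /= expr0 expr1 mul1r mulN1r subrr addr0 -mulr2n mulrn_eq0.
  case: (w false x0 =P 0) => [w0|/eqP]; last by exists false; exists x0.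
  by rewrite w0 add0r; exists true; exists x0.
by exists (w s); last exact: eig_w.
Qed.

Lemma expectE A v : expect A v = \sum_x (v x)^* * opvec A v x.
Proof.
by apply: eq_bigr => x _; rewrite mulr_sumr; apply: eq_bigr => y _; rewrite mulrA.
Qed.

Lemma expect_eigen_anticomm P g v :
  pm_eigenvector g v -> anticomm P g -> expect (pmat P) v = 0.
Proof.
case=> s eig_gv anti_Pg; set E := expect _ _.
have conj_sign : ((-1) ^+ s)^* = (-1) ^+ s :> algC by rewrite rmorph_sign.
have sE1 : (-1) ^+ s * E = \sum_x (v x)^* * opvec (pmat P) (opvec (pmat g) v) x.
  rewrite /E expectE mulr_sumr; apply: eq_bigr => x _.
  by rewrite (eq_opvec _ _ eig_gv) opvecZ mulrCA.
have sE2 : (-1) ^+ s * E = \sum_x (opvec (pmat g) v x)^* * opvec (pmat P) v x.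
  rewrite /E expectE mulr_sumr; apply: eq_bigr => x _.
  by rewrite eig_gv rmorphM /= conj_sign mulrA.
have : (-1) ^+ s * E = - ((-1) ^+ s * E).
  rewrite {1}sE2 opvec_pmat_adj sE1 -sumrN; apply: eq_bigr => x _.
  by rewrite opvec_pmatC anticommC anti_Pg mulN1r mulrN.
move/eqP; rewrite -addr_eq0 -mulr2n mulrn_eq0 /= mulf_eq0 signr_eq0.
by move/eqP.
Qed.

Lemma expectZ (A : bits m -> bits m -> algC) c v :
  expect A (fun x => c * v x) = c^* * c * expect A v.
Proof.
rewrite mulr_sumr; apply: eq_bigr => x _; rewrite mulr_sumr; apply: eq_bigr => y _.
by rewrite rmorphM /=; ring.
Qed.

Lemma exists_normalization (v : bits m -> algC) :
  (exists x, v x != 0) -> exists c, is_state (fun x => c * v x).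
Proof.
case=> x0 vx0_neq0; set N := \sum_x (v x)^* * v x.
have norm_ge0 x : 0 <= (v x)^* * v x by rewrite mulrC mul_conjC_ge0.
have N_neq0 : N != 0.
  apply: contraNneq vx0_neq0 => /(psumr_eq0P (fun x _ => norm_ge0 x)) /(_ x0 isT).
  by move/eqP; rewrite mulrC mul_conjC_eq0.
set c := (sqrtC N)^-1; exists c.
have c_real : c^* = c.
  by apply: geC0_conj; rewrite invr_ge0 sqrtC_ge0 sumr_ge0.
have ccN : c * c * N = 1 by rewrite -invfM -expr2 sqrtCK mulVf.
rewrite /is_state -ccN mulr_sumr; apply: eq_bigr => x _.
by rewrite rmorphM /= c_real; ring.
Qed.

End StabilizerStates.

Lemma exists_notin (T : finType) (A B : {set T}) :
  (#|B| < #|A|)%N -> exists2 x, x \in A & x \notin B.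
Proof.
move=> ltBA; have [/subset_leq_card|/subsetPn[x]] := boolP (A \subset B); last by exists x.
by rewrite leqNgt ltBA.
Qed.

Lemma pow2_cancel a k l n : (a * 2 ^ k = 2 ^ n)%N -> n = (k + l)%N -> a = (2 ^ l)%N.
Proof.
by move=> akn def_n; apply/eqP; rewrite -(eqn_pmul2r (expn_gt0 2 k)) akn def_n addnC expnD.
Qed.

Section PauliVectors.
Variable m : nat.
Implicit Types a b c w x : pvec m.
Implicit Types A B L S T U : {set pvec m}.

Definition pvmul a b : pvec m := [ffun j => pauli_mul (a j) (b j)].
Definition pv1 : pvec m := [ffun=> PI].

Lemma pvmulC : commutative pvmul.
Proof. by move=> a b; apply/ffunP => j; rewrite !ffunE pauli_mulC. Qed.
Lemma pvmulA : associative pvmul.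
Proof. by move=> a b c; apply/ffunP => j; rewrite !ffunE pauli_mulA. Qed.
Lemma pv1mul : left_id pv1 pvmul.
Proof. by move=> a; apply/ffunP => j; rewrite !ffunE pauli_mul1. Qed.
Lemma pvmulxx a : pvmul a a = pv1.
Proof. by apply/ffunP => j; rewrite !ffunE pauli_mulxx. Qed.
Lemma pvmulK a : cancel (pvmul a) (pvmul a).
Proof. by move=> b; rewrite pvmulA pvmulxx pv1mul. Qed.
Lemma pvmul_eq1 a b : pvmul a b = pv1 -> a = b.
Proof. by move=> ab1; rewrite -(pvmulK a b) ab1 pvmulC pv1mul. Qed.
Lemma pvmulACA : interchange pvmul pvmul.
Proof. by move=> a b c d; rewrite -!pvmulA (pvmulA b) (pvmulC b) -pvmulA. Qed.

Lemma anticommDl a b c : anticomm (pvmul a b) c = anticomm a c (+) anticomm b c.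
Proof.
rewrite /anticomm -big_split /=.
by apply: eq_bigr => j _; rewrite ffunE pauli_antiDl.
Qed.

Lemma anticommDr a b c : anticomm c (pvmul a b) = anticomm c a (+) anticomm c b.
Proof. by rewrite anticommC anticommDl !(anticommC c). Qed.

Lemma anticommxx a : anticomm a a = false.
Proof. by rewrite /anticomm big1 // => j _; apply: pauli_antixx. Qed.

Lemma anticomm1 a : anticomm pv1 a = false.
Proof. by rewrite /anticomm big1 // => j _; rewrite ffunE. Qed.

Lemma exists_anticomm a : a != pv1 -> exists w, anticomm a w.
Proof.
move=> a_neq1; have [j aj_neq1] : exists j, a j != PI.
  apply/existsP; apply: contraNT a_neq1 => /existsPn aI.
  by apply/eqP/ffunP => j; rewrite ffunE; apply/eqP/negPn.
pose partner := if a j is PX then PZ else PX.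
exists [ffun i => if i == j then partner else PI].
rewrite /anticomm (bigD1 j) //= ffunE eqxx big1 => [|i /negbTE neq_ij].
  by move: aj_neq1; rewrite /partner; case: (a j).
by rewrite ffunE neq_ij pauli_antiC.
Qed.

Definition psubgroup A := pv1 \in A /\ {in A &, forall a b, pvmul a b \in A}.
Definition commutant A := [set x : pvec m | [forall a in A, ~~ anticomm x a]].
Definition isotropic A := {in A &, forall a b, ~~ anticomm a b}.

Lemma commutantP A x : reflect {in A, forall a, ~~ anticomm x a} (x \in commutant A).
Proof. by rewrite inE; apply: forall_inP. Qed.

Lemma commutantS A B : A \subset B -> commutant B \subset commutant A.
Proof.
move=> sAB; apply/subsetP => x /commutantP xB; apply/commutantP => a aA.
by apply: xB; apply: (subsetP sAB).
Qed.

Lemma commutant1 : commutant [set pv1] = setT.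
Proof.
by apply/setP => x; rewrite in_setT; apply/commutantP => a /set1P->; rewrite anticommC anticomm1.
Qed.

Lemma isotropic_sub_commutant A : isotropic A -> A \subset commutant A.
Proof. by move=> isoA; apply/subsetP => a aA; apply/commutantP => b; apply: isoA. Qed.

Lemma psubgroup1 : psubgroup [set pv1].
Proof. by split=> [|a b /set1P-> /set1P->]; rewrite ?pvmulxx set11. Qed.

Lemma psubgroup_pair x : psubgroup [set pv1; x].
Proof.
split=> [|a b]; first by rewrite set21.
rewrite !inE => /orP[]/eqP-> /orP[]/eqP->;
  by rewrite ?pv1mul ?pvmulxx ?(pvmulC x) ?pv1mul eqxx ?orbT.
Qed.

Lemma psubgroupI A B : psubgroup A -> psubgroup B -> psubgroup (A :&: B).
Proof.
case=> A1 mulA [B1 mulB]; split=> [|a b]; first by rewrite inE A1 B1.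
by rewrite !inE => /andP[aA aB] /andP[bA bB]; rewrite mulA ?mulB.
Qed.

Lemma psubgroup_commutant A : psubgroup (commutant A).
Proof.
split=> [|x y /commutantP xA /commutantP yA]; apply/commutantP => a aA.
  by rewrite anticomm1.
by rewrite anticommDl (negbTE (xA a aA)) (negbTE (yA a aA)).
Qed.

Lemma in_commutant1 x w : (x \in commutant [set w]) = ~~ anticomm x w.
Proof. by apply/commutantP/idP => [|xw a /set1P->//]; apply; rewrite set11. Qed.

Lemma card_commutant1I A a w : psubgroup A -> a \in A -> anticomm a w ->
  (#|A :&: commutant [set w]| * 2 = #|A|)%N.
Proof.
case=> _ mulA aA a_w; rewrite -(cardsID (commutant [set w]) A) muln2 -addnn; congr (_ + _)%N.
have -> : A :\: commutant [set w] = pvmul a @: (A :&: commutant [set w]).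
  apply/setP => y; rewrite in_setD in_commutant1; apply/andP/imsetP => [[yw yA]|[b]].
    exists (pvmul a y); last by rewrite pvmulK.
    by rewrite in_setI in_commutant1 mulA // anticommDl a_w (negbNE yw).
  rewrite in_setI in_commutant1 => /andP[bA bw] ->.
  by split; [rewrite anticommDl a_w (negbTE bw) | apply: mulA].
by rewrite card_imset //; apply: can_inj (pvmulK a).
Qed.

Lemma psubgroup_halving A : psubgroup A -> A != [set pv1] ->
  exists2 B, psubgroup B & (#|B| * 2 = #|A|)%N /\ #|commutant B| = (#|commutant A| * 2)%N.
Proof.
move=> sgA A_neq1; have [a aA a_neq1] : exists2 a, a \in A & a != pv1.
  apply/exists_inP; apply: contraNT A_neq1 => /exists_inPn A1; apply/eqP/setP => a.
  by rewrite inE; apply/idP/eqP => [/A1/negPn/eqP|->] //; case: sgA.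
have [w a_w] := exists_anticomm a_neq1.
set B := A :&: commutant [set w].
have sgB : psubgroup B by apply: psubgroupI sgA (psubgroup_commutant _).
have CA : commutant A = commutant B :&: commutant [set a].
  apply/setP => x; rewrite in_setI in_commutant1.
  apply/commutantP/andP => [xA|[/commutantP xB xa] b bA].
    split; last exact: xA.
    by apply/commutantP => b /setIP[/xA].
  have [b_w|b_nw] := boolP (anticomm b w); last by apply: xB; rewrite in_setI in_commutant1 bA.
  have abB : pvmul a b \in B by rewrite in_setI in_commutant1 anticommDl a_w b_w sgA.2.
  by have := xB _ abB; rewrite anticommDr (negbTE xa).
have wCB : w \in commutant B.
  by apply/commutantP => b; rewrite in_setI in_commutant1 anticommC => /andP[].
exists B => //; split; first exact: card_commutant1I sgA aA a_w.
by rewrite CA (card_commutant1I (psubgroup_commutant B) wCB) // anticommC.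
Qed.

Lemma psubgroup_ind (P : {set pvec m} -> Prop) :
  P [set pv1] ->
  (forall A B, psubgroup B -> P B -> (#|B| * 2 = #|A|)%N ->
     #|commutant B| = (#|commutant A| * 2)%N -> P A) ->
  forall A, psubgroup A -> P A.
Proof.
move=> base step A; have [n] := ubnP #|A|; elim: n A => // n IH A ltAn sgA.
have [->//|A_neq1] := eqVneq A [set pv1].
have [B sgB [cardB cardCB]] := psubgroup_halving sgA A_neq1.
have ltBn : (#|B| < n)%N.
  have : (0 < #|B|)%N by apply/card_gt0P; exists pv1; case: sgB.
  by move: ltAn; rewrite -cardB; lia.
exact: step sgB (IH B ltBn sgB) cardB cardCB.
Qed.

Lemma card_psubgroup A : psubgroup A -> exists k, #|A| = (2 ^ k)%N.
Proof.
move=> sgA; elim/psubgroup_ind: A / sgA => [|A B _ [k cardB] <- _].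
  by exists 0%N; rewrite cards1.
by exists k.+1; rewrite cardB expnSr.
Qed.

Lemma card_commutant A : psubgroup A -> (#|commutant A| * #|A| = 4 ^ m)%N.
Proof.
move=> sgA; elim/psubgroup_ind: A / sgA => [|A B _ IH <- CB].
  by rewrite commutant1 cards1 muln1 cardsT card_ffun card_pauli card_ord.
by rewrite -IH CB mulnAC -mulnA.
Qed.

Lemma psubgroup_mul L T : psubgroup L -> psubgroup T -> psubgroup (pvmul @2: (L, T)).
Proof.
case=> L1 mulL [T1 mulT]; split; first by apply/imset2P; exists pv1 pv1; rewrite ?pvmulxx.
move=> _ _ /imset2P[l t lL tT ->] /imset2P[l' t' lL' tT' ->].
by rewrite pvmulACA; apply: imset2_f; [apply: mulL | apply: mulT].
Qed.

Lemma mem_mul_l L T l : pv1 \in T -> l \in L -> l \in pvmul @2: (L, T).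
Proof. by move=> T1 lL; apply/imset2P; exists l pv1; rewrite // pvmulC pv1mul. Qed.

Lemma mem_mul_r L T t : pv1 \in L -> t \in T -> t \in pvmul @2: (L, T).
Proof. by move=> L1 tT; apply/imset2P; exists pv1 t; rewrite // pv1mul. Qed.

Lemma card_psubgroup_mul L T : psubgroup L -> psubgroup T -> L :&: T \subset [set pv1] ->
  #|pvmul @2: (L, T)| = (#|L| * #|T|)%N.
Proof.
move=> [_ mulL] [_ mulT] LT1; rewrite curry_imset2X card_in_imset ?cardsX //.
move=> [l t] [l' t'] /setXP[/= lL tT] /setXP[/= lL' tT'] /= eq_lt.
have ll'_tt' : pvmul l l' = pvmul t t' by apply: pvmul_eq1; rewrite pvmulACA eq_lt pvmulxx.
have /set1P ll'1 : pvmul l l' \in [set pv1].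
  by apply: (subsetP LT1); rewrite inE mulL // ll'_tt' mulT.
by rewrite (pvmul_eq1 ll'1) (pvmul_eq1 (etrans (esym ll'_tt') ll'1)).
Qed.

Lemma commutant_mul L T : pv1 \in L -> pv1 \in T ->
  commutant (pvmul @2: (L, T)) = commutant L :&: commutant T.
Proof.
move=> L1 T1; apply/setP => x; rewrite in_setI.
apply/commutantP/andP => [xLT|[/commutantP xL /commutantP xT] _ /imset2P[l t lL tT ->]].
  split; apply/commutantP => a aX; apply: xLT; [exact: mem_mul_l | exact: mem_mul_r].
by rewrite anticommDr (negbTE (xL l lL)) (negbTE (xT t tT)).
Qed.

Lemma isotropic_mul L T : isotropic L -> isotropic T -> T \subset commutant L ->
  isotropic (pvmul @2: (L, T)).
Proof.
move=> isoL isoT /subsetP TCL _ _ /imset2P[l t lL tT ->] /imset2P[l' t' lL' tT' ->].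
have comm_LT a b : a \in L -> b \in T -> anticomm a b = false.
  by move=> aL /TCL /commutantP /(_ a aL); rewrite anticommC => /negbTE.
rewrite anticommDl !anticommDr (negbTE (isoL _ _ lL lL')) (negbTE (isoT _ _ tT tT')).
by rewrite (comm_LT l t') // (anticommC t) (comm_LT l' t).
Qed.

Lemma isotropic_pair x : isotropic [set pv1; x].
Proof.
by move=> a b; rewrite !inE => /orP[]/eqP-> /orP[]/eqP->;
  rewrite ?anticomm1 ?anticommxx // anticommC anticomm1.
Qed.

Definition transversal_isotropic S k L :=
  [/\ psubgroup L, isotropic L, L :&: S \subset [set pv1], #|L| = (2 ^ k)%N
    & (#|commutant L :&: S| <= 2 ^ (m - k))%N].

Lemma four_expn : (4 ^ m = 2 ^ (m + m))%N.
Proof. by rewrite expnD -expnMn. Qed.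

Section Extension.
Variables (S L : {set pvec m}) (k : nat).
Hypotheses (sgS : psubgroup S) (lt_km : (k < m)%N) (trL : transversal_isotropic S k L).
Local Notation T := (commutant L :&: S).
Local Notation U := (pvmul @2: (L, T)).

Let sgT : psubgroup T. Proof. exact: psubgroupI (psubgroup_commutant L) sgS. Qed.

Lemma exists_extension_vector : exists x, [/\ x \in commutant L, x \notin U
  & (2 ^ (m - k) <= #|T|)%N -> exists2 t, t \in T & anticomm t x].
Proof.
case: trL => sgL isoL LS1 cardL le_T.
have [j cardT] := card_psubgroup sgT.
have le_jmk : (j <= m - k)%N by rewrite -(@leq_exp2l 2) // -cardT.
have sgU : psubgroup U by apply: psubgroup_mul.
have cardU : #|U| = (2 ^ (k + j))%N.
  rewrite card_psubgroup_mul // ?cardL ?cardT ?expnD //.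
  by apply: subset_trans LS1; apply: setIS; apply: subsetIr.
have cardCL : #|commutant L| = (2 ^ (m + m - k))%N.
  by apply: (@pow2_cancel _ k _ (m + m)); [rewrite -cardL card_commutant // four_expn | lia].
have [lt_j|ge_j] := ltnP j (m - k).
  have [x xCL xU] : exists2 x, x \in commutant L & x \notin U.
    by apply: exists_notin; rewrite cardU cardCL ltn_exp2l //; lia.
  by exists x; split=> // /leq_trans/(_ (eq_leq cardT)); rewrite leq_exp2l // leqNgt lt_j.
have cardCU : #|commutant U| = (2 ^ m)%N.
  by apply: (@pow2_cancel _ (k + j) _ (m + m)); [rewrite -cardU card_commutant // four_expn | lia].
have [x xCL] : exists2 x, x \in commutant L & x \notin U :|: commutant U.
  apply: exists_notin; rewrite cardsU cardU cardCL cardCU.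
  have : (0 < #|U :&: commutant U|)%N.
    by apply/card_gt0P; exists pv1; rewrite inE; case: sgU => -> _; case: (psubgroup_commutant U).
  rewrite (_ : k + j = m)%N; last by lia.
  have : (2 ^ m.+1 <= 2 ^ (m + m - k))%N by rewrite leq_exp2l //; lia.
  by rewrite expnS; lia.
rewrite in_setU negb_or => /andP[xU]; rewrite inE => /forall_inPn[_ /imset2P[l t lL tT ->]].
move/negPn; rewrite anticommDr (negbTE (commutantP _ _ xCL l lL)) /= => x_t.
by exists x; split=> // _; exists t; rewrite // anticommC.
Qed.

Lemma transversal_isotropic_step : exists L', transversal_isotropic S k.+1 L'.
Proof.
have [x [xCL xU anti_x]] := exists_extension_vector.
case: trL => sgL isoL LS1 cardL le_T.
have LU : L \subset U by apply/subsetP => l; apply: mem_mul_l; case: sgT.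
have x_neq1 : x != pv1 by apply: contraNneq xU => ->; case: (psubgroup_mul sgL sgT).
have xL : x \notin L by apply: contra xU; apply: (subsetP LU).
have XCL : [set pv1; x] \subset commutant L.
  by apply/subsetP => y /set2P[]->; [case: (psubgroup_commutant L) | ].
exists (pvmul @2: (L, [set pv1; x])); split.
- by apply: psubgroup_mul sgL (psubgroup_pair x).
- exact: isotropic_mul isoL (@isotropic_pair x) XCL.
- apply/subsetP => _ /setIP[/imset2P[l y lL /set2P[]-> ->] lyS].
    by apply: (subsetP LS1); rewrite in_setI lyS andbT pvmulC pv1mul.
  have lxT : pvmul l x \in T.
    rewrite in_setI lyS andbT; apply: (psubgroup_commutant L).2 xCL.
    exact: (subsetP (isotropic_sub_commutant isoL)).
  by case/negP: xU; rewrite -(pvmulK l x); apply: imset2_f.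
- rewrite card_psubgroup_mul ?cardL ?cards2 1?eq_sym ?x_neq1 ?expnSr //.
    exact: psubgroup_pair.
  apply/subsetP => y; rewrite !inE => /andP[yL /orP[]/eqP y_eq]; first by rewrite y_eq.
  by rewrite -y_eq yL in xL.
have CL'S : commutant (pvmul @2: (L, [set pv1; x])) :&: S \subset T :&: commutant [set x].
  rewrite commutant_mul ?set21 //; last by case: sgL.
  apply/subsetP => v; rewrite !in_setI => /andP[/andP[vL vX] vS]; rewrite vL vS.
  by move: vX; apply: (subsetP (commutantS _)); rewrite sub1set set22.
apply: leq_trans (subset_leq_card CL'S) _.
have [lt_T|ge_T] := ltnP #|T| (2 ^ (m - k)).
  apply: leq_trans (subset_leq_card (subsetIl _ _)) _.
  have [j cardT] := card_psubgroup sgT.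
  by move: lt_T; rewrite cardT ltn_exp2l // leq_exp2l //; lia.
have [t tT t_x] := anti_x ge_T.
have := card_commutant1I sgT tT t_x; move: le_T; rewrite (_ : m - k = (m - k.+1).+1)%N; last by lia.
by rewrite expnSr => le_T eqT; rewrite -(leq_pmul2r (isT : 0 < 2)%N) eqT.
Qed.
End Extension.

Lemma exists_transversal_isotropic S : psubgroup S -> (#|S| <= 2 ^ m)%N ->
  forall k, (k <= m)%N -> exists L, transversal_isotropic S k L.
Proof.
move=> sgS le_S; elim=> [_|k IH lt_km]; last first.
  by have [L trL] := IH (ltnW lt_km); apply: transversal_isotropic_step trL.
exists [set pv1]; split; rewrite ?cards1 ?subsetIl ?commutant1 ?setTI ?subn0 //.
  exact: psubgroup1.
by move=> a b /set1P-> /set1P->; rewrite anticommxx.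
Qed.

Lemma exists_isotropic_anticommuting S : psubgroup S -> (#|S| <= 2 ^ m)%N ->
  exists2 L, isotropic L & {in S, forall a, a != pv1 -> exists2 l, l \in L & anticomm a l}.
Proof.
move=> sgS le_S; have [L [_ isoL _ _]] := exists_transversal_isotropic sgS le_S (leqnn m).
rewrite subnn expn0 => le1; exists L => // a aS a_neq1.
have : a \notin commutant L.
  apply: contraTN le1 => aCL; rewrite -ltnNge.
  apply: (@leq_trans #|[set pv1; a]|); last apply: subset_leq_card.
    by rewrite cards2 eq_sym a_neq1.
  apply/subsetP => y /set2P[]->; rewrite in_setI ?aCL ?aS //.
  by rewrite (psubgroup_commutant L).1 sgS.1.
by rewrite inE => /forall_inPn[l lL /negPn a_l]; exists l.
Qed.
End PauliVectors.

Theorem mainTheorem14 (m : nat) (P : 'I_(2 ^ m) -> pstring m) :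
  (1 <= m)%N ->
  (forall i : 'I_(2 ^ m), val i = 0%N -> forall q, P i q = PI) ->
  (forall i j : 'I_(2 ^ m), (forall q, P i q = P j q) -> i = j) ->
  (forall i j : 'I_(2 ^ m), exists k : 'I_(2 ^ m),
      proportional (opmul (pmat (P i)) (pmat (P j))) (pmat (P k))) ->
  exists phi : bits m -> algC,
    is_state phi /\
    forall i : 'I_(2 ^ m), val i <> 0%N -> expect (pmat (P i)) phi = 0.
Proof.
move=> _ P0 P_inj P_mul; pose vecP i : pvec m := finfun (P i).
have vecP_inj : injective vecP.
  by move=> i j /ffunP eq_ij; apply: P_inj => q; have := eq_ij q; rewrite !ffunE.
have vecP0 : vecP (Ordinal (expn_gt0 2 m)) = pv1 m by apply/ffunP => q; rewrite !ffunE P0.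
pose S := [set vecP i | i : 'I_(2 ^ m)].
have sgS : psubgroup S.
  split=> [|_ _ /imsetP[i _ ->] /imsetP[j _ ->]]; first by rewrite -vecP0 imset_f.
  have [k PiPj_Pk] := P_mul i j; apply/imsetP; exists k => //.
  by apply/ffunP => q; rewrite !ffunE; apply: (proportional_opmul_pmat PiPj_Pk).
have cardS : #|S| = (2 ^ m)%N by rewrite card_imset // card_ord.
have [L isoL anti_S] := exists_isotropic_anticommuting sgS (eq_leq cardS).
have [v v_neq0 eig_v] :
    exists2 v, exists x, v x != 0 & forall g, g \in enum L -> pm_eigenvector g v.
  by apply: exists_common_eigenvector => g h; rewrite !mem_enum; apply: isoL.
have [c state_cv] := exists_normalization v_neq0.
exists (fun x => c * v x); split=> // i i_neq0.
have vecPi_neq1 : vecP i != pv1 m.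
  by rewrite -vecP0; apply/eqP => /vecP_inj eq_i; apply: i_neq0; rewrite eq_i.
have [l lL anti_il] := anti_S (vecP i) (imset_f vecP isT) vecPi_neq1.
rewrite expectZ (@expect_eigen_anticomm _ _ l) ?mulr0 //; first by apply: eig_v; rewrite mem_enum.
by move: anti_il; rewrite /anticomm; under eq_bigr do rewrite ffunE.
Qed.
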